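(* Let $n\ge 1$, $A\in\mathbb{R}^{n\times n}$ and $C\in\mathbb{R}^{1\times n}$. Assume that $(A,C)$ is an observable pair and that all eigenvalues of $A$ are nonzero. Let $t_1\in\{0,1,2,\ldots\}$ and let $\bar t$ be a positive integer that is not a pathological sampling period of $A$. Then the $n\times n$ matrix with rows $CA^{t_1},CA^{t_1+\bar t},CA^{t_1+2\bar t},\ldots,CA^{t_1+(n-1)\bar t}$ has rank $n$.
   Context: Setting: discrete-time single-output system $x(t+1)=Ax(t)+Bu(t)$, $y(t)=Cx(t)+Du(t)$ with output measured at selected time instances; for time instances $t_1,\ldots,t_l$, the sample-based observability matrix is the matrix with rows $CA^{t_1},\ldots,CA^{t_l}$, and sample-based observability means this matrix has rank $n$. $(A,C)$ is observable if the matrix with rows $C,CA,\ldots,CA^{n-1}$ has rank $n$. A positive integer $h$ is called a pathological sampling period of $A$ if there exist two distinct eigenvalues $\lambda_p\neq\lambda_q$ of $A$, belonging to different Jordan blocks of the Jordan form of $A$, such that $\lambda_p^h=\lambda_q^h$ (equivalently, $|\lambda_p|=|\lambda_q|$ and $\pi/(\phi_q-\phi_p)=h/(2(k_q-k_p))$ for some distinct $k_p,k_q\in\{0,\ldots,h-1\}$, where $\phi_i$ is the phase of $\lambda_i$). *)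

From HB Require Import structures.
From mathcomp Require Import all_boot all_order all_algebra.
From mathcomp Require Import complex.
Set Implicit Arguments. Unset Strict Implicit. Unset Printing Implicit Defensive.
Import Order.TTheory GRing.Theory Num.Theory.
Local Open Scope ring_scope.

(* Real matrices have entries in an arbitrary real closed field R (e.g. the
   reals); eigenvalues are taken in the complexification R[i]. *)

Definition cplx_mx (R : rcfType) (n : nat) (A : 'M[R]_n) : 'M[R[i]]_n :=
  map_mx (fun x : R => (x%:C)%C) A.

Definition ceigenvalue (R : rcfType) (n : nat) (A : 'M[R]_n) (lambda : R[i]) :=
  eigenvalue (cplx_mx A) lambda.

Definition obsv_mx (R : rcfType) (n : nat) (A : 'M[R]_n.+1) (C : 'rV[R]_n.+1)
  : 'M[R]_n.+1 := \matrix_(i < n.+1) (C *m A ^+ i).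

Definition observable (R : rcfType) (n : nat) (A : 'M[R]_n.+1) (C : 'rV[R]_n.+1) :=
  \rank (obsv_mx A C) = n.+1.

Definition sample_obsv_mx (R : rcfType) (n l : nat) (A : 'M[R]_n.+1)
  (C : 'rV[R]_n.+1) (t : 'I_l -> nat) : 'M[R]_(l, n.+1) :=
  \matrix_(k < l) (C *m A ^+ (t k)).

(* h is a pathological sampling period of A: h > 0 and there are two distinct
   eigenvalues lp <> lq of A (hence lying in different Jordan blocks) with
   lp^h = lq^h. *)
Definition pathological_period (R : rcfType) (n : nat) (A : 'M[R]_n) (h : nat) :=
  (0 < h)%N /\
  exists lp lq : R[i],
    [/\ ceigenvalue A lp, ceigenvalue A lq, lp != lq & lp ^+ h = lq ^+ h].

(* Suppose a nonzero row vector v annihilates the sampled matrix, and let q be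
   the polynomial with coefficient vector v, of degree at most n.  Then
   C A^t1 q(A^tbar) = 0.  By observability, the characteristic polynomial p of A
   divides every polynomial g with C g(A) = 0, so p divides X^t1 q(X^tbar), hence
   q(X^tbar) because 0 is not a root of p.  Since tbar is not pathological,
   z |-> z^tbar is injective on the roots of p, and peeling off the roots of p one
   at a time shows that the product of the X - z^tbar, over the n + 1 roots z of p
   counted with multiplicity, divides q: too many roots for a nonzero polynomial
   of degree at most n. *)

From HB Require Import structures.
From mathcomp Require Import all_boot all_order all_algebra.
From mathcomp Require Import complex.
Set Implicit Arguments. Unset Strict Implicit. Unset Printing Implicit Defensive.
Import Order.TTheory GRing.Theory Num.Theory.
Local Open Scope ring_scope.

Definition krylov_mx (K : pzRingType) (n : nat) (M : 'M[K]_n) (c : 'rV[K]_n) :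
  'M[K]_n := \matrix_(i < n) (c *m M ^+ i).

Lemma horner_mx_comp (R : comNzRingType) (n : nat) (M : 'M[R]_n.+1)
    (p q : {poly R}) :
  horner_mx M (q \Po p) = horner_mx (horner_mx M p) q.
Proof.
rewrite comp_polyE [in RHS](_ : q = \sum_(i < size q) q`_i *: 'X^i); last first.
  by rewrite -poly_def coefK.
rewrite !rmorph_sum /=.
by apply: eq_bigr => i _; rewrite !horner_mxZ !rmorphXn /= horner_mx_X.
Qed.

Lemma mulmx_krylov (R : comNzRingType) (n : nat) (M : 'M[R]_n.+1)
    (c v : 'rV[R]_n.+1) :
  v *m krylov_mx M c = c *m horner_mx M (\poly_(i < n.+1) v 0 (inord i)).
Proof.
rewrite mulmx_sum_row poly_def rmorph_sum /= mulmx_sumr; apply: eq_bigr => i _.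
by rewrite rowK inord_val horner_mxZ /= rmorphXn /= horner_mx_X scalemxAr.
Qed.

Lemma char_poly_dvd_krylov_annihilator (K : fieldType) (n : nat)
    (M : 'M[K]_n.+1) (c : 'rV[K]_n.+1) (g : {poly K}) :
  row_free (krylov_mx M c) -> c *m horner_mx M g = 0 -> char_poly M %| g.
Proof.
move=> Mc_free cg0; set p := char_poly M.
have p_neq0 : p != 0 by rewrite -size_poly_gt0 size_char_poly.
set r := g %% p; apply/modp_eq0P; rewrite -/r.
have cr0 : c *m horner_mx M r = 0.
  by move: cg0; rewrite (divp_eq g p) rmorphD rmorphM /= Cayley_Hamilton mulr0 add0r.
have size_r : (size r <= n.+1)%N by rewrite -ltnS -(size_char_poly M) ltn_modp.
have rE : r = \poly_(i < n.+1) (\row_(j < n.+1) r`_j) 0 (inord i).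
  rewrite -[LHS](take_poly_id size_r); apply: eq_poly => i lt_i_n.
  by rewrite mxE inordK.
have r0 : \row_(j < n.+1) r`_j = 0.
  by apply: (row_free_inj Mc_free); rewrite mul0mx mulmx_krylov -rE.
by rewrite rE r0; apply/polyP => i; rewrite coef_poly coef0 mxE; case: ifP.
Qed.

Lemma XnsubC_exp_factor (R : comNzRingType) (h : nat) (z : R) :
  exists2 u : {poly R},
    'X^h - (z ^+ h)%:P = ('X - z%:P) * u & u.[z] = z ^+ h.-1 *+ h.
Proof.
exists (\sum_(i < h) 'X ^+ (h.-1 - i) * z%:P ^+ i).
  by rewrite rmorphXn subrXX.
rewrite horner_sum (eq_bigr (fun=> z ^+ h.-1)) ?sumr_const ?card_ord // => i _.
rewrite hornerM hornerXn -rmorphXn hornerC -exprD subnK //.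
by rewrite -ltnS (ltn_predK (ltn_ord i)).
Qed.

Lemma dvdp_prod_XsubC_exp (F : fieldType) (h : nat) (rs : seq F) (q : {poly F}) :
  h%:R != 0 :> F -> 0 \notin rs -> {in rs &, injective (fun z => z ^+ h)} ->
  \prod_(z <- rs) ('X - z%:P) %| q \Po 'X^h ->
  \prod_(z <- rs) ('X - (z ^+ h)%:P) %| q.
Proof.
move=> h_neq0; elim: rs q => [|z rs IHrs] q.
  by move=> *; rewrite big_nil dvd1p.
rewrite inE negb_or eq_sym => /andP[z_neq0 rs_neq0] inj_h.
rewrite !big_cons => dvd_q.
have /factor_theorem[q1 qE] : root q (z ^+ h).
  have := dvdp_trans (dvdp_mulr _ (dvdpp _)) dvd_q.
  by rewrite dvdp_XsubCl /root horner_comp hornerXn.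
rewrite qE mulrC dvdp_mul2r ?polyXsubC_eq0 //; apply: IHrs => //.
  by move=> x y x_rs y_rs; apply: inj_h; rewrite inE ?x_rs ?y_rs orbT.
have [u zu uz] := XnsubC_exp_factor h z.
(* A root x of u in rs would satisfy x ^+ h = z ^+ h, hence x = z; but
   u.[z] = h z^(h-1) is nonzero. *)
have u_coprime : coprimep (\prod_(x <- rs) ('X - x%:P)) u.
  rewrite big_seq; apply: (big_ind (fun p => coprimep p u)) => [|p1 p2|x x_rs].
  - exact: coprime1p.
  - by rewrite coprimepMl => -> ->.
  rewrite coprimep_sym coprimep_XsubC.
  apply: contraNN (_ : u.[z] != 0) => [/eqP ux0|].
    have x_z : x = z.
      apply: inj_h; rewrite ?inE ?x_rs ?eqxx ?orbT //; apply/eqP.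
      have := congr1 (horner^~ x) zu.
      by rewrite hornerM ux0 mulr0 !hornerE => /eqP; rewrite subr_eq0.
    by rewrite -x_z ux0.
  by rewrite uz -mulr_natr mulf_neq0 ?expf_neq0.
rewrite -(Gauss_dvdpl _ u_coprime) -(@dvdp_mul2l _ ('X - z%:P)) ?polyXsubC_eq0 //.
rewrite mulrCA -zu.
by rewrite qE comp_polyM comp_polyB comp_polyX comp_polyC in dvd_q.
Qed.

Lemma dvdp_comp_Xn_leq (F : closedFieldType) (h : nat) (p q : {poly F}) :
  h%:R != 0 :> F -> p \is monic -> ~~ root p 0 ->
  {in root p &, injective (fun z => z ^+ h)} ->
  q != 0 -> p %| q \Po 'X^h -> (size p <= size q)%N.
Proof.
move=> h_neq0 p_monic p0 inj_h q_neq0 dvd_q.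
have [rs pE] := closed_field_poly_normal p.
rewrite (monicP p_monic) scale1r in pE.
have root_p z : root p z = (z \in rs) by rewrite pE root_prod_XsubC.
have /(dvdp_leq q_neq0) : \prod_(z <- rs) ('X - (z ^+ h)%:P) %| q.
  apply: dvdp_prod_XsubC_exp; rewrite -?pE -?root_p //.
  by move=> x y; rewrite -!root_p; apply: inj_h.
by rewrite pE !size_prod_XsubC.
Qed.

Lemma row_free_krylov_subsample (F : closedFieldType) (n : nat)
    (M : 'M[F]_n.+1) (c : 'rV[F]_n.+1) (t h : nat) :
  h%:R != 0 :> F -> ~~ eigenvalue M 0 ->
  {in eigenvalue M &, injective (fun z => z ^+ h)} ->
  row_free (krylov_mx M c) -> row_free (krylov_mx (M ^+ h) (c *m M ^+ t)).
Proof.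
move=> h_neq0 M0 inj_h Mc_free; rewrite -kermx_eq0; apply/rowV0P => v.
rewrite sub_kermx => /eqP vK0.
set q := \poly_(i < n.+1) v 0 (inord i).
have [q0 | q_neq0] := eqVneq q 0.
  apply/rowP => i; have /polyP/(_ i) := q0.
  by rewrite coef_poly ltn_ord inord_val coef0 mxE.
set p := char_poly M.
have root_p : root p =1 eigenvalue M by move=> z; rewrite eigenvalue_root_char.
have dvd_q : p %| 'X^t * (q \Po 'X^h).
  apply: char_poly_dvd_krylov_annihilator Mc_free _.
  rewrite rmorphM rmorphXn /= horner_mx_X mulmxA horner_mx_comp.
  by rewrite rmorphXn /= horner_mx_X -mulmx_krylov.
rewrite Gauss_dvdpr in dvd_q; last first.
  by rewrite coprimep_expr // -[X in coprimep _ X]subr0 coprimep_XsubC root_p.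
have p0 : ~~ root p 0 by rewrite root_p.
have inj_p : {in root p &, injective (fun z => z ^+ h)}.
  by apply: sub_in2 inj_h => z; rewrite -!topredE /= root_p.
have := dvdp_comp_Xn_leq h_neq0 (char_poly_monic M) p0 inj_p q_neq0 dvd_q.
by rewrite size_char_poly ltnNge size_poly.
Qed.

Theorem theorem2 (R : rcfType) (n : nat) (A : 'M[R]_n.+1) (C : 'rV[R]_n.+1)
  (t1 tbar : nat) :
  observable A C ->
  (forall lambda : R[i], ceigenvalue A lambda -> lambda != 0) ->
  (0 < tbar)%N ->
  ~ pathological_period A tbar ->
  \rank (sample_obsv_mx A C (fun k : 'I_n.+1 => (t1 + k * tbar)%N)) = n.+1.
Proof.
move=> AC_obs A_neq0 tbar_gt0 not_path.
pose f := real_complex R; set M := cplx_mx A; set c := map_mx f C.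
have obsvE : map_mx f (obsv_mx A C) = krylov_mx M c.
  by apply/row_matrixP => i; rewrite -map_row !rowK map_mxM rmorphXn.
have sampleE :
    map_mx f (sample_obsv_mx A C (fun k : 'I_n.+1 => (t1 + k * tbar)%N))
    = krylov_mx (M ^+ tbar) (c *m M ^+ t1).
  apply/row_matrixP => k; rewrite -map_row !rowK map_mxM rmorphXn.
  by rewrite exprD mulnC exprM -mulmxE mulmxA.
rewrite -(mxrank_map f) sampleE; apply/eqP.
apply: (@row_free_krylov_subsample R[i]).
- by rewrite pnatr_eq0 -lt0n.
- by apply/negP => /A_neq0/eqP.
- move=> z w z_eig w_eig zw; apply/eqP; apply: contra_notT not_path => z_neq_w.
  by split=> //; exists z, w; exact: (And4 z_eig w_eig z_neq_w zw).
- by rewrite /row_free -obsvE mxrank_map AC_obs.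
Qed.
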